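(* Let $E$ be a spectral set in a FTvN system $(\mathcal V,\mathcal W,\lambda)$. Then: (a) $\overline{E}$, $E^\circ$ and $\partial(E)$ are spectral. (b) If $\mathcal V$ is a Hilbert space, then $\overline{\operatorname{conv}(E)}$ is spectral. (c) If $\mathcal V$ is finite dimensional, then $\operatorname{conv}(E)$ is spectral; additionally, the convex cone generated by $E$ is spectral. (d) If $\mathcal V$ is a Hilbert space, then $E^p$ is spectral. In particular, if $\mathcal V$ is a Hilbert space and $S$ is a spectral set which is also a linear subspace of $\mathcal V$, then $S^\perp$ is spectral. (e) If $\mathcal V$ is a Hilbert space, then the sum of two compact convex spectral sets in $\mathcal V$ is spectral. (f) If $\mathcal V$ is finite dimensional, then the sum of two convex spectral sets is spectral.
   Context: A Fan-Theobald-von Neumann (FTvN) system is a triple $(\mathcal V,\mathcal W,\lambda)$ where $\mathcal V,\mathcal W$ are real inner product spaces and $\lambda:\mathcal V\to\mathcal W$ is a map such that: (A1) $\|\lambda(x)\|=\|x\|$ for all $x$; (A2) $\langle x,y\rangle\le\langle\lambda(x),\lambda(y)\rangle$ for all $x,y$; (A3) for every $c\in\mathcal V$ and $q\in\lambda(\mathcal V)$ there exists $x\in\mathcal V$ with $\lambda(x)=q$ and $\langle c,x\rangle=\langle\lambda(c),\lambda(x)\rangle$. The $\lambda$-orbit of $u$ is $[u]=\{x:\lambda(x)=\lambda(u)\}$. A set $E\subseteq\mathcal V$ is spectral if $E=\lambda^{-1}(Q)$ for some $Q\subseteq\mathcal W$, equivalently $x\in E\Rightarrow[x]\subseteq E$.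 $\overline{E}$, $E^\circ$, $\partial(E)$, $S^\perp$ denote closure, interior, boundary, orthogonal complement; $E^p=\{y\in\mathcal V:\langle y,x\rangle\le0\ \forall x\in E\}$ is the polar cone of $E$. *)

From HB Require Import structures.
From mathcomp Require Import all_boot all_order all_algebra.
From mathcomp Require Import all_classical all_reals all_analysis.
Set Implicit Arguments. Unset Strict Implicit. Unset Printing Implicit Defensive.
Import Order.TTheory GRing.Theory Num.Theory.
Import numFieldNormedType.Exports.
Local Open Scope classical_set_scope.
Local Open Scope ring_scope.

Definition inner_product (R : realType) (V : normedModType R)
  (ip : V -> V -> R) : Prop :=
  [/\ (forall x y, ip x y = ip y x),
      (forall (a : R) (x y z : V), ip (a *: x + y) z = a * ip x z + ip y z)
    & (forall x, ip x x = `|x| ^+ 2)].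

(* Fan-Theobald-von Neumann system (A1)-(A3). *)
Definition FTvN (R : realType) (V W : normedModType R)
  (ipV : V -> V -> R) (ipW : W -> W -> R) (lam : V -> W) : Prop :=
  [/\ (forall x, `|lam x| = `|x|),
      (forall x y, ipV x y <= ipW (lam x) (lam y))
    & (forall (c : V) (q : W), (exists u, lam u = q) ->
         exists x, lam x = q /\ ipV c x = ipW (lam c) (lam x))].

Definition spectral (R : realType) (V W : normedModType R) (lam : V -> W)
  (E : set V) : Prop := exists Q : set W, E = lam @^-1` Q.

Definition boundary (T : topologicalType) (E : set T) : set T :=
  closure E `\` interior E.

Definition is_convex (R : realType) (V : normedModType R) (A : set V) : Prop :=
  forall (x y : V) (t : R), 0 <= t -> t <= 1 -> A x -> A y ->
    A (t *: x + (1 - t) *: y).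

Definition convex_hull (R : realType) (V : normedModType R) (E : set V) : set V :=
  smallest (@is_convex R V) E.

Definition convex_cone (R : realType) (V : normedModType R) (C : set V) : Prop :=
  forall (x y : V) (a b : R), 0 <= a -> 0 <= b -> C x -> C y ->
    C (a *: x + b *: y).

Definition conic_hull (R : realType) (V : normedModType R) (E : set V) : set V :=
  smallest (@convex_cone R V) E.

Definition polar (R : realType) (V : normedModType R) (ip : V -> V -> R)
  (E : set V) : set V := [set y | forall x, E x -> ip y x <= 0].

Definition orth (R : realType) (V : normedModType R) (ip : V -> V -> R)
  (S : set V) : set V := [set y | forall x, S x -> ip y x = 0].

Definition linear_subspace (R : realType) (V : normedModType R) (S : set V) : Prop :=
  S 0 /\ forall (a : R) (x y : V), S x -> S y -> S (a *: x + y).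

Definition minkowski_sum (R : realType) (V : normedModType R) (A B : set V) : set V :=
  [set z | exists x y, A x /\ B y /\ z = x + y].

Definition hilbert (R : realType) (V : normedModType R) : Prop :=
  forall F : set_system V, ProperFilter F -> cauchy F -> cvg F.

Definition finite_dim (R : realType) (V : normedModType R) : Prop :=
  exists (n : nat) (b : 'I_n -> V), forall x : V,
    exists c : 'I_n -> R, x = \sum_(i < n) c i *: b i.

(* A set is spectral iff it is a union of lam-orbits. By (A1)-(A2) lam is
   1-Lipschitz, and by (A3) a point y of the orbit of x can be moved into the
   orbit of any x' at cost at most |x' - x|; this gives (a). For polars, (A3)
   aligns an element of the orbit of x with the given point.

   The convex statements rest on one observation. Call C support-dominated
   when its support function satisfies h_C a' <= h_C a whenever
   lam a' = lam a. If C is convex and support-dominated, z is in C,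
   lam z' = lam z and z' has a nearest point p in C, then z' is in C:
   otherwise take a := z' - p and a' in the orbit of a aligned with z, so that
   <a, z'> <= <a', z> <= h_C a <= <a, p> < <a, z'>. Spectral sets are
   support-dominated, and the property passes to convex hulls, closures and
   Minkowski sums. Nearest points exist in compact sets and in closed convex
   subsets of a Hilbert space. In finite dimension orbits are compact, hence
   (Caratheodory) so are convex hulls of finitely many orbits, and every point
   of conv E, or of a sum of convex spectral sets, lies in such a compact
   spectral piece; the conic hull is the cone over conv E, and lam is
   positively homogeneous. *)

From HB Require Import structures.
From mathcomp Require Import all_boot all_order all_algebra.
From mathcomp Require Import all_classical all_reals all_analysis.
From mathcomp Require Import ring lra.
Set Implicit Arguments. Unset Strict Implicit. Unset Printing Implicit Defensive.
Import Order.TTheory GRing.Theory Num.Theory.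
Import numFieldNormedType.Exports.
Local Open Scope classical_set_scope.
Local Open Scope ring_scope.

(** * Inner products *)

Section InnerProduct.
Variables (R : realType) (V : normedModType R) (ip : V -> V -> R).
Hypothesis hip : inner_product ip.

Lemma ipC x y : ip x y = ip y x. Proof. by case: hip. Qed.

Lemma ip_self x : ip x x = `|x| ^+ 2. Proof. by case: hip. Qed.

Lemma ipZDl a x y z : ip (a *: x + y) z = a * ip x z + ip y z.
Proof. by case: hip. Qed.

Lemma ip0l z : ip 0 z = 0.
Proof. by have := ipZDl 1 0 0 z; rewrite scale1r addr0 mul1r; lra. Qed.

Lemma ipDl x y z : ip (x + y) z = ip x z + ip y z.
Proof. by rewrite -{1}(scale1r x) ipZDl mul1r. Qed.

Lemma ipZl a x z : ip (a *: x) z = a * ip x z.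
Proof. by rewrite -(addr0 (a *: x)) ipZDl ip0l addr0. Qed.

Lemma ipNl x z : ip (- x) z = - ip x z.
Proof. by rewrite -scaleN1r ipZl mulN1r. Qed.

Lemma ipBl x y z : ip (x - y) z = ip x z - ip y z.
Proof. by rewrite ipDl ipNl. Qed.

Lemma ip0r z : ip z 0 = 0. Proof. by rewrite ipC ip0l. Qed.

Lemma ipDr x y z : ip z (x + y) = ip z x + ip z y.
Proof. by rewrite ipC ipDl !(ipC z). Qed.

Lemma ipZr a x z : ip z (a *: x) = a * ip z x.
Proof. by rewrite ipC ipZl ipC. Qed.

Lemma ipNr x z : ip z (- x) = - ip z x.
Proof. by rewrite ipC ipNl ipC. Qed.

Lemma ipBr x y z : ip z (x - y) = ip z x - ip z y.
Proof. by rewrite ipDr ipNr. Qed.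

Lemma normD2 x y : `|x + y| ^+ 2 = `|x| ^+ 2 + 2 * ip x y + `|y| ^+ 2.
Proof. by rewrite -!ip_self ipDl !ipDr (ipC y x); ring. Qed.

Lemma normB2 x y : `|x - y| ^+ 2 = `|x| ^+ 2 - 2 * ip x y + `|y| ^+ 2.
Proof. by rewrite -!ip_self ipBl !ipBr (ipC y x); ring. Qed.

Lemma parallelogram_law (x y : V) :
  `|x + y| ^+ 2 + `|x - y| ^+ 2 = 2 * `|x| ^+ 2 + 2 * `|y| ^+ 2.
Proof. by rewrite normD2 normB2; ring. Qed.

(* Expand [0 <= | |y| x - |x| y |^2]. *)
Lemma cauchy_schwarz x y : ip x y <= `|x| * `|y|.
Proof.
have [->|x0] := eqVneq x 0; first by rewrite ip0l normr0 mul0r.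
have [->|y0] := eqVneq y 0; first by rewrite ip0r normr0 mulr0.
have nxy : 0 < `|x| * `|y| by rewrite mulr_gt0 ?normr_gt0.
have := sqr_ge0 (Num.norm (`|y| *: x - `|x| *: y)).
rewrite normB2 !normrZ !normr_id ipZl ipZr => h.
have : 0 <= (`|x| * `|y|) * (2 * (`|x| * `|y| - ip x y)).
  by move: h; congr (_ <= _); ring.
by rewrite pmulr_rge0 // pmulr_rge0 // subr_ge0.
Qed.

End InnerProduct.

(** * Spectral sets in FTvN systems *)

Definition saturated (R : realType) (V W : normedModType R) (lam : V -> W)
  (E : set V) : Prop := forall x y, E x -> lam y = lam x -> E y.

Lemma spectralP (R : realType) (V W : normedModType R) (lam : V -> W)
  (E : set V) : spectral lam E <-> saturated lam E.
Proof.
split=> [[Q ->] x y /= Qx -> //|satE].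
exists (lam @` E); apply/seteqP; split=> [x Ex|x [y Ey hy]]; first by exists x.
exact: satE Ey _.
Qed.

Section FTvNSystem.
Variables (R : realType) (V W : normedModType R)
  (ipV : V -> V -> R) (ipW : W -> W -> R) (lam : V -> W).
Hypotheses (hV : inner_product ipV) (hW : inner_product ipW)
  (hF : FTvN ipV ipW lam).

Lemma lam_norm x : `|lam x| = `|x|. Proof. by case: hF. Qed.

Lemma ip_le_lam x y : ipV x y <= ipW (lam x) (lam y). Proof. by case: hF. Qed.

Lemma lam_aligned c u :
  exists x, lam x = lam u /\ ipV c x = ipW (lam c) (lam x).
Proof. by case: hF => _ _; apply; exists u. Qed.

Lemma lam_dist x y : `|lam x - lam y| <= `|x - y|.
Proof.
rewrite -ler_sqr ?nnegrE // (normB2 hV) (normB2 hW) !lam_norm.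
by have := ip_le_lam x y; lra.
Qed.

Lemma lam_continuous : continuous lam.
Proof.
move=> x; apply/cvgrPdist_lt => e e0; near=> y.
by apply: le_lt_trans (lam_dist x y) _; near: y; exact: cvgr_dist_lt.
Unshelve. all: by end_near.
Qed.

(* Move [y] into the orbit of [x'] along an element aligned with [y] (A3);
   the move costs no more than going from [x] to [x']. *)
Lemma orbit_transfer x x' y : lam y = lam x ->
  exists y', lam y' = lam x' /\ `|y' - y| <= `|x' - x|.
Proof.
move=> yx; have [y' [y'x' aligned]] := lam_aligned y x'.
exists y'; split => //; apply: le_trans (lam_dist x' x).
rewrite -ler_sqr ?nnegrE // (normB2 hV) (normB2 hW) (ipC hV) aligned.
by rewrite y'x' yx (ipC hW) -!lam_norm y'x' yx.
Qed.

Lemma lam_eq0 x : lam x = lam 0 -> x = 0.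
Proof. by move=> x0; apply/normr0_eq0; rewrite -lam_norm x0 lam_norm normr0. Qed.

(* (A2) for [t *: x] and [x] forces [|lam (t *: x) - t *: lam x| ^+ 2 <= 0]. *)
Lemma lamZ t x : 0 <= t -> lam (t *: x) = t *: lam x.
Proof.
move=> t0; apply/eqP; rewrite -subr_eq0 -normr_eq0 -sqrf_eq0 eq_le sqr_ge0 andbT.
rewrite (normB2 hW) normrZ (ger0_norm t0) !lam_norm normrZ (ger0_norm t0) (ipZr hW).
have := ip_le_lam (t *: x) x; rewrite (ipZl hV) (ip_self hV) => h.
have : t * (t * `|x| ^+ 2) <= t * ipW (lam (t *: x)) (lam x) by rewrite ler_wpM2l.
lra.
Qed.

Lemma closure_saturated E : saturated lam E -> saturated lam (closure E).
Proof.
move=> satE x y clx yx B /nbhs_ballP[e /= e0 yB].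
have /clx[x' [Ex' xx']] := nbhsx_ballx x _ e0.
have [y' [y'x' y'y]] := orbit_transfer x' yx.
exists y'; split; first exact: satE Ex' y'x'.
apply: yB; rewrite -ball_normE /= in xx' *.
by rewrite distrC (le_lt_trans y'y) // distrC.
Qed.

Lemma interior_saturated E : saturated lam E -> saturated lam (interior E).
Proof.
move=> satE x y /nbhs_ballP[e /= e0 xE] yx; apply/nbhs_ballP.
exists e => // y'; rewrite -ball_normE /= => yy'.
have [x' [x'y' x'x]] := orbit_transfer y' (esym yx).
apply: satE (esym x'y'); apply: xE; rewrite -ball_normE /=.
by rewrite distrC (le_lt_trans x'x) // distrC.
Qed.

Lemma boundary_saturated E : saturated lam E -> saturated lam (boundary E).
Proof.
move=> satE x y [clx intx] yx; split; first exact: closure_saturated clx yx.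
by move=> inty; apply/intx/(interior_saturated satE inty).
Qed.

Lemma polar_saturated E : saturated lam E -> saturated lam (polar ipV E).
Proof.
move=> satE y z Ey zy x Ex; have [x' [x'x aligned]] := lam_aligned y x.
apply: le_trans (ip_le_lam z x) _; rewrite zy -x'x -aligned.
exact/Ey/(satE _ _ Ex x'x).
Qed.

Lemma orth_saturated S : saturated lam S -> linear_subspace S ->
  saturated lam (orth ipV S).
Proof.
move=> satS [S0 Slin] y z Sy zy x Sx.
have Sz : polar ipV S z by apply: polar_saturated zy => // w Sw; rewrite Sy.
have Snx : S (- x) by rewrite -[- x]addr0 -scaleN1r; apply: Slin.
by have := Sz _ Sx; have := Sz _ Snx; rewrite (ipNr hV); lra.
Qed.

End FTvNSystem.

(** * Convex sets *)

Section ConvexSets.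
Variables (R : realType) (V : normedModType R).
Implicit Types (A B E F : set V).

Lemma convex_hull_convex E : is_convex (convex_hull E).
Proof.
move=> x y t t0 t1 Ex Ey C [convC EC].
exact: convC (Ex C (conj convC EC)) (Ey C (conj convC EC)).
Qed.

Lemma convex_hull_sub E F : is_convex F -> E `<=` F -> convex_hull E `<=` F.
Proof. exact: smallest_sub. Qed.

Lemma sub_convex_hull E : E `<=` convex_hull E.
Proof. exact: sub_smallest. Qed.

Lemma convex_hullS E F : E `<=` F -> convex_hull E `<=` convex_hull F.
Proof.
move=> EF; apply: convex_hull_sub; first exact: convex_hull_convex.
exact: subset_trans EF (@sub_convex_hull F).
Qed.

Lemma convex_combB (t : R) (x y x' y' : V) :
  t *: x + (1 - t) *: y - (t *: x' + (1 - t) *: y') =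
  t *: (x - x') + (1 - t) *: (y - y').
Proof. by rewrite !scalerBr opprD addrACA. Qed.

Lemma closure_convex A : is_convex A -> is_convex (closure A).
Proof.
move=> convA x y t t0 t1 clx cly B /nbhs_ballP[e /= e0 eB].
have /clx[x' [Ax' xx']] := nbhsx_ballx x _ e0.
have /cly[y' [Ay' yy']] := nbhsx_ballx y _ e0.
exists (t *: x' + (1 - t) *: y'); split; first exact: convA.
apply: eB; rewrite -ball_normE /= in xx' yy' *.
rewrite convex_combB (le_lt_trans (ler_normD _ _)) //.
rewrite !normrZ !ger0_norm ?subr_ge0 //.
have [->|t_neq0] := eqVneq t 0; first by rewrite mul0r add0r subr0 mul1r.
have t_gt0 : 0 < t by rewrite lt_def t_neq0.
have : t * `|x - x'| < t * e by rewrite ltr_pM2l.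
have : (1 - t) * `|y - y'| <= (1 - t) * e by rewrite ler_wpM2l ?subr_ge0 // ltW.
lra.
Qed.

Lemma minkowski_sum_convex A B : is_convex A -> is_convex B ->
  is_convex (minkowski_sum A B).
Proof.
move=> convA convB _ _ t t0 t1 [x1 [y1 [Ax1 [By1 ->]]]] [x2 [y2 [Ax2 [By2 ->]]]].
exists (t *: x1 + (1 - t) *: x2), (t *: y1 + (1 - t) *: y2).
by split; [exact: convA|split; [exact: convB|rewrite !scalerDr addrACA]].
Qed.

Lemma minkowski_sum_compact A B : compact A -> compact B ->
  compact (minkowski_sum A B).
Proof.
move=> cA cB.
have -> : minkowski_sum A B = (fun p : V * V => p.1 + p.2) @` (A `*` B).
  apply/seteqP; split=> [_ [x [y [Ax [By ->]]]]|_ [[x y] [/= Ax By] <-]].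
    by exists (x, y).
  by exists x, y.
apply: continuous_compact; last exact: compact_setX.
exact/continuous_subspaceT/add_continuous.
Qed.

Lemma conic_hull_cone E : convex_cone (conic_hull E).
Proof.
move=> x y a b a0 b0 Ex Ey C [coneC EC].
exact: coneC (Ex C (conj coneC EC)) (Ey C (conj coneC EC)).
Qed.

Lemma scaled_convex_hull_cone E :
  convex_cone [set t *: y | t in [set t : R | 0 <= t] & y in convex_hull E].
Proof.
move=> _ _ a b a0 b0 [s s0 [x Ex <-]] [t t0 [y Ey <-]]; rewrite !scalerA.
have as0 : 0 <= a * s by rewrite mulr_ge0.
have bt0 : 0 <= b * t by rewrite mulr_ge0.
have [sum0|sum_neq0] := eqVneq (a * s + b * t) 0.
  have as_eq0 : a * s = 0 by apply/eqP; rewrite eq_le as0 andbT -sum0 lerDl.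
  move: sum0; rewrite as_eq0 add0r => ->.
  by exists 0 => /=; [|exists x => //; rewrite !scale0r addr0].
set u := a * s + b * t in sum_neq0 *.
have u_gt0 : 0 < u by rewrite lt_def sum_neq0 addr_ge0.
have weightE : 1 - a * s / u = b * t / u.
  by apply/eqP; rewrite subr_eq -mulrDl addrC divff.
exists u; first exact: ltW.
exists (a * s / u *: x + (1 - a * s / u) *: y).
  apply: convex_hull_convex => //; first by rewrite divr_ge0 // ltW.
  by rewrite ler_pdivrMr // mul1r lerDl.
by rewrite weightE scalerDr !scalerA !(mulrC u) !divfK.
Qed.

Lemma conic_hullE E :
  conic_hull E = [set t *: y | t in [set t : R | 0 <= t] & y in convex_hull E].
Proof.
apply/seteqP; split.
  apply: smallest_sub; first exact: scaled_convex_hull_cone.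
  by move=> x Ex; exists 1; rewrite /= ?ler01 //; exists x;
    [exact: sub_convex_hull|rewrite scale1r].
move=> _ [t t0 [y Ey <-]].
have hull_cone : convex_hull E `<=` conic_hull E.
  apply: convex_hull_sub; last exact: sub_smallest.
  by move=> u v r r0 r1 Eu Ev; apply: conic_hull_cone; rewrite ?subr_ge0.
rewrite -[t *: y]addr0 -(scale0r y).
by apply: conic_hull_cone => //; exact: hull_cone.
Qed.

End ConvexSets.

(** * Nearest points *)

Section NearestPoint.
Variables (R : realType) (V : normedModType R) (ip : V -> V -> R).
Hypothesis hip : inner_product ip.

Definition nearest (C : set V) (z p : V) : Prop :=
  C p /\ forall c, C c -> `|z - p| <= `|z - c|.

(* Compare [z - p] with [z - q] for [q] on the segment from [p] to [c],
   at the parameter that minimises the quadratic [|z - q| ^+ 2]. *)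
Lemma nearest_ip_le0 C z p c : is_convex C -> nearest C z p -> C c ->
  ip (z - p) (c - p) <= 0.
Proof.
move=> convC [Cp pmin] Cc; rewrite leNgt; apply/negP => g_gt0.
set g := ip (z - p) (c - p) in g_gt0; set N := `|c - p| ^+ 2.
have N0 : 0 <= N by apply: sqr_ge0.
have gN : 0 < g + N by lra.
pose t := g / (g + N).
have t_gt0 : 0 < t by rewrite divr_gt0.
have t1 : t <= 1 by rewrite ler_pdivrMr // mul1r; lra.
have := pmin _ (convC c p t (ltW t_gt0) t1 Cc Cp).
have -> : z - (t *: c + (1 - t) *: p) = (z - p) - t *: (c - p).
  rewrite scalerBl scale1r scalerBr !opprD !opprK !addrA.
  by congr (_ + _); exact: addrAC.
rewrite -ler_sqr ?nnegrE // [X in _ <= X](normB2 hip) (ipZr hip) normrZ exprMn.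
rewrite (ger0_norm (ltW t_gt0)) -/N -/g => h.
have : t * (2 * g) <= t * (t * N) by move: h; rewrite expr2; nra.
rewrite ler_pM2l // /t mulrAC ler_pdivlMr //; nra.
Qed.

End NearestPoint.

Lemma continuous_dist (R : realType) (V : normedModType R) (z : V) :
  continuous (fun c : V => `|z - c|).
Proof. by move=> c; apply: cvg_norm; apply: cvgB; [exact: cvg_cst|exact: cvg_id]. Qed.
Arguments continuous_dist {R V} z.

Lemma compact_nearest (R : realType) (V : normedModType R) (C : set V) z :
  compact C -> C !=set0 -> exists p, nearest C z p.
Proof.
move=> cC C0.
have [p Cp pmin] := compact_EVT_min C0 cC (continuous_subspaceT (continuous_dist z)).
by exists p; split=> [|c Cc]; [rewrite inE in Cp|apply: pmin; rewrite inE].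
Qed.

Section HilbertProjection.
Variables (R : realType) (V : normedModType R) (ip : V -> V -> R).
Hypothesis hip : inner_product ip.
Variables (C : set V) (z : V).
Hypotheses (convC : is_convex C) (closedC : closed C) (C0 : C !=set0).

Let d2 := inf [set `|z - c| ^+ 2 | c in C].

Let dists_has_inf : has_inf [set `|z - c| ^+ 2 | c in C].
Proof.
split; last by exists 0 => _ [c _ <-]; exact: sqr_ge0.
by case: C0 => c Cc; exists (`|z - c| ^+ 2), c.
Qed.

Let d2_le c : C c -> d2 <= `|z - c| ^+ 2.
Proof. by move=> Cc; apply: ge_inf; [case: dists_has_inf|exists c]. Qed.

Let near_minimizer de : 0 < de -> exists2 c, C c & `|z - c| ^+ 2 < d2 + de.
Proof.
by move=> de0; have [_ [c Cc <-]] := inf_adherent de0 dists_has_inf; exists c.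
Qed.

(* The midpoint of [c1] and [c2] lies in [C], so the parallelogram law
   applied to [z - c1] and [z - c2] bounds [|c1 - c2|]. *)
Let minimizer_dist c1 c2 : C c1 -> C c2 ->
  `|c1 - c2| ^+ 2 <= 2 * `|z - c1| ^+ 2 + 2 * `|z - c2| ^+ 2 - 4 * d2.
Proof.
move=> Cc1 Cc2; set m := 2^-1 *: c1 + (1 - 2^-1) *: c2.
have half : 1 - 2^-1 = 2^-1 :> R by rewrite {1}(splitr 1) mul1r addrK.
have Cmid : C m by apply: convC; rewrite // invf_le1 // ler1n.
have midE : (z - c1) + (z - c2) = 2 *: (z - m).
  rewrite /m half -scalerDr scalerBr scalerA mulfV ?pnatr_eq0 // scale1r.
  by rewrite scaler_nat mulr2n opprD addrACA.
have diffE : (z - c1) - (z - c2) = - (c1 - c2).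
  by rewrite !opprB addrC addrA subrK.
have := parallelogram_law hip (z - c1) (z - c2).
rewrite midE diffE normrN normrZ exprMn ger0_norm ?ler0n //.
have := d2_le Cmid; rewrite -natrX; lra.
Qed.

Let minimizers de := [set c | C c /\ `|z - c| ^+ 2 < d2 + de].

Let minimizing_filter := filter_from [set de : R | 0 < de] minimizers.

Let minimizing_filter_filter : Filter minimizing_filter.
Proof.
apply: filter_from_filter; first by exists 1 => /=.
move=> i j /= i0 j0; exists (Num.min i j); first by rewrite /= lt_min i0 j0.
by move=> c [Cc cmin]; do 2?split => //; apply: lt_le_trans cmin _;
  rewrite lerD2l ge_min lexx ?orbT.
Qed.

Let minimizing_filter_proper : ProperFilter minimizing_filter.
Proof.
apply: filter_from_proper => // de de0.
by have [c Cc cde] := near_minimizer de0; exists c.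
Qed.

Let minimizing_filter_cauchy : cauchy minimizing_filter.
Proof.
apply: (@cauchy_exP _ _ _ minimizing_filter_filter) => e e0.
have de0 : 0 < e ^+ 2 / 4 by rewrite divr_gt0 // exprn_gt0.
have [x Cx xmin] := near_minimizer de0.
exists x, (e ^+ 2 / 4) => // c [Cc cmin]; rewrite -ball_normE /=.
rewrite -ltr_sqr ?nnegrE ?(ltW e0) //.
by have := minimizer_dist Cx Cc; lra.
Qed.

Lemma hilbert_nearest : hilbert V -> exists p, nearest C z p.
Proof.
move=> complV.
have := complV _ minimizing_filter_proper minimizing_filter_cauchy.
set p := lim minimizing_filter => cvgp; exists p.
have sub_closed A : closed A -> minimizing_filter A -> A p.
  by move=> clA FA; apply: (closed_cvg (u_ := id) A clA FA p cvgp).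
split=> [|c Cc].
  by apply: sub_closed closedC _; exists 1 => //= c [].
rewrite -ler_sqr ?nnegrE //; apply: le_trans (d2_le Cc).
apply/ler_addgt0Pr => de de0.
have clde : closed [set y | `|z - y| ^+ 2 <= d2 + de].
  apply: (@preimage_closed _ _ (fun y => `|z - y| ^+ 2) [set r | r <= d2 + de]).
    by move=> y _; exact: cvgM (continuous_dist z y) (continuous_dist z y).
  exact: closed_le.
by apply: sub_closed clde _; exists de => // y [_ /ltW].
Qed.

End HilbertProjection.

(** * Support domination *)

Section SupportDomination.
Variables (R : realType) (V W : normedModType R)
  (ipV : V -> V -> R) (ipW : W -> W -> R) (lam : V -> W).
Hypotheses (hV : inner_product ipV) (hW : inner_product ipW)
  (hF : FTvN ipV ipW lam).

(* The support function [h_C a = sup_(c in C) ipV a c] satisfies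
   [h_C a' <= h_C a] whenever [lam a' = lam a]; stated without suprema. *)
Definition support_dominated (C : set V) : Prop :=
  forall a a', lam a' = lam a -> forall c, C c -> forall e, 0 < e ->
  exists2 c', C c' & ipV a' c <= ipV a c' + e.

Lemma saturated_support_dominated C : saturated lam C -> support_dominated C.
Proof.
move=> satC a a' a'a c Cc e e0; have [c' [c'c aligned]] := lam_aligned hF a c.
exists c'; first exact: satC Cc c'c.
by have := ip_le_lam hF a' c; rewrite aligned c'c -a'a; lra.
Qed.

Lemma convex_hull_support_dominated E : support_dominated E ->
  support_dominated (convex_hull E).
Proof.
move=> domE a a' a'a; set P := [set c | forall e, 0 < e ->
  exists2 c', convex_hull E c' & ipV a' c <= ipV a c' + e].
suff : convex_hull E `<=` P by move=> hullP c /hullP.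
apply: convex_hull_sub => [x y t t0 t1 Px Py e e0|x Ex e e0].
  have [x' Ex' x'le] := Px e e0; have [y' Ey' y'le] := Py e e0.
  exists (t *: x' + (1 - t) *: y'); first exact: convex_hull_convex.
  rewrite !(ipDr hV) !(ipZr hV).
  have : t * ipV a' x <= t * (ipV a x' + e) by rewrite ler_wpM2l.
  have : (1 - t) * ipV a' y <= (1 - t) * (ipV a y' + e).
    by rewrite ler_wpM2l ?subr_ge0.
  lra.
have [c' Ec' c'le] := domE a a' a'a x Ex e e0.
by exists c' => //; exact: sub_convex_hull.
Qed.

Lemma minkowski_sum_support_dominated A B :
  support_dominated A -> support_dominated B ->
  support_dominated (minkowski_sum A B).
Proof.
move=> domA domB a a' a'a _ [x [y [Ax [By ->]]]] e e0.
have e2 : 0 < e / 2 by rewrite divr_gt0.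
have [x' Ax' x'le] := domA a a' a'a x Ax _ e2.
have [y' By' y'le] := domB a a' a'a y By _ e2.
by exists (x' + y'); [exists x', y'|rewrite !(ipDr hV); lra].
Qed.

Lemma closure_support_dominated C : support_dominated C ->
  support_dominated (closure C).
Proof.
move=> domC a a' a'a c clc e e0.
pose d := e / 2 / (`|a'| + 1).
have d0 : 0 < d by rewrite !divr_gt0 // ltr_pwDr.
have /clc[c1 [Cc1 cc1]] := nbhsx_ballx c _ d0.
rewrite -ball_normE /= in cc1.
have [c' Cc' c'le] := domC a a' a'a c1 Cc1 (e / 2) (divr_gt0 e0 (ltr0Sn _ 1)).
exists c'; first exact: subset_closure.
have -> : ipV a' c = ipV a' c1 + ipV a' (c - c1) by rewrite (ipBr hV); ring.
have := cauchy_schwarz hV a' (c - c1).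
have : `|a'| * `|c - c1| <= `|a'| * d by rewrite ler_wpM2l // ltW.
have : `|a'| * d <= e / 2.
  rewrite /d mulrA ler_pdivrMr ?ltr_pwDr // mulrDr mulr1 mulrC lerDl.
  by rewrite divr_ge0 ?ltW.
lra.
Qed.

Lemma support_dominated_nearest_mem C z z' : is_convex C ->
  support_dominated C -> C z -> lam z' = lam z ->
  (exists p, nearest C z' p) -> C z'.
Proof.
move=> convC domC Cz z'z [p nearp]; apply: contrapT => Cz'_false.
set a := z' - p.
have a_neq0 : a != 0.
  rewrite /a subr_eq0; apply/eqP => z'p; apply: Cz'_false.
  by rewrite z'p; case: nearp.
have na_gt0 : 0 < `|a| ^+ 2 by rewrite exprn_gt0 // normr_gt0.
have [a' [a'a aligned]] := lam_aligned hF z a.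
have [c' Cc' c'le] := domC a a' a'a z Cz _ (divr_gt0 na_gt0 (ltr0Sn _ 1)).
have := nearest_ip_le0 hV convC nearp Cc'; rewrite (ipBr hV) -/a.
have : ipV a z' <= ipV a' z.
  rewrite (ipC hV a' z) aligned a'a -z'z (ipC hW); exact: (ip_le_lam hF a z').
have : ipV a z' = ipV a p + `|a| ^+ 2.
  by rewrite -(ip_self hV) -(ipDr hV) addrC subrK.
lra.
Qed.

End SupportDomination.

(** * Finite-dimensional spaces *)

Lemma mx_norm_entry (R : realType) n (c : 'rV[R]_n) i : `|c ord0 i| <= `|c|.
Proof.
have /mapP[j _ ->] : `|c ord0 i| \in [seq `|c x.1 x.2| | x : 'I_1 * 'I_n].
  by apply/mapP; exists (ord0, i) => //=; rewrite mem_enum.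
by rewrite [leRHS]mx_normrE; apply/bigmax_geP; right; exists j.
Qed.

Section Coordinates.
Variables (R : realType) (V : normedModType R) (n : nat) (b : 'I_n -> V).

Definition lincomb (c : 'rV[R]_n) : V := \sum_(i < n) c ord0 i *: b i.

Lemma lincombZ k c : lincomb (k *: c) = k *: lincomb c.
Proof. by rewrite scaler_sumr; apply: eq_bigr => i _; rewrite mxE scalerA. Qed.

Lemma lincombB c d : lincomb (c - d) = lincomb c - lincomb d.
Proof. by rewrite -sumrB; apply: eq_bigr => i _; rewrite !mxE scalerBl. Qed.

Lemma lincomb_norm_le c : `|lincomb c| <= `|c| * \sum_(i < n) `|b i|.
Proof.
rewrite mulr_sumr; apply: le_trans (ler_norm_sum _ _ _) _.
by apply: ler_sum => i _; rewrite normrZ ler_wpM2r ?mx_norm_entry.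
Qed.

Lemma lincomb_continuous : continuous lincomb.
Proof.
set L := \sum_(i < n) `|b i|; have L0 : 0 <= L by rewrite sumr_ge0.
move=> c B /nbhs_ballP[e /= e0 eB]; apply/nbhs_ballP.
exists (e / (L + 1)); first by rewrite /= divr_gt0 // ltr_wpDl.
move=> d; rewrite -!ball_normE /= ltr_pdivlMr ?ltr_wpDl // => cd.
apply: eB; rewrite -ball_normE /= -lincombB.
apply: le_lt_trans (lincomb_norm_le _) (le_lt_trans _ cd).
by rewrite ler_wpM2l // lerDl.
Qed.

Hypothesis b_free : forall c, lincomb c = 0 -> c = 0.

Lemma lincomb_norm_ge :
  exists2 m : R, 0 < m & forall c, m * `|c| <= `|lincomb c|.
Proof.
pose S := [set c : 'rV[R]_n | `|c| = 1].
have normalize c : c != 0 -> S (`|c|^-1 *: c).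
  by move=> c0; rewrite /S /= normrZ normfV normr_id mulVf // normr_eq0.
have [[c0 Sc0]|S0] := pselect (S !=set0); last first.
  exists 1 => // c; have [->|c_neq0] := eqVneq c 0; first by rewrite normr0 mulr0.
  by case: S0; exists (`|c|^-1 *: c); exact: normalize.
have compactS : compact S.
  apply: bounded_closed_compact.
    by exists 1; split => // M M1 c /= ->; exact: ltW.
  have : closed ((fun c : 'rV[R]_n => `|c|) @^-1` [set 1]).
    by apply: closed_comp => [c _|]; [exact: norm_continuous|exact: closed_eq].
  by [].
have normlin_cont : continuous (fun c => `|lincomb c|).
  move=> c; apply: continuous_comp (@lincomb_continuous c) _.
  exact: norm_continuous.
have [m Sm mmin] := compact_EVT_min (ex_intro _ c0 Sc0) compactS
  (continuous_subspaceT normlin_cont).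
rewrite inE in Sm; exists `|lincomb m|.
  rewrite normr_gt0; apply: contraPneq Sm => /b_free ->.
  by rewrite normr0 => /eqP; rewrite eq_sym oner_eq0.
move=> c; have [->|c_neq0] := eqVneq c 0; first by rewrite normr0 mulr0.
have := mmin _ (mem_set (normalize c c_neq0)).
by rewrite lincombZ normrZ normfV normr_id ler_pdivlMl ?normr_gt0 // mulrC.
Qed.

Hypothesis b_span : forall x, exists c, lincomb c = x.

Lemma bounded_closed_compact_basis (A : set V) : closed A ->
  (exists M, forall x, A x -> `|x| <= M) -> compact A.
Proof.
move=> closedA [M AM]; have [m m0 mle] := lincomb_norm_ge.
have -> : A = lincomb @` (lincomb @^-1` A).
  apply/seteqP; split => [x Ax|_ [c Ac <-] //].
  by have [c cx] := b_span x; exists c; rewrite //= cx.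
apply: continuous_compact; first exact/continuous_subspaceT/lincomb_continuous.
apply: bounded_closed_compact; last first.
  exact: closed_comp (fun c _ => @lincomb_continuous c) closedA.
exists (M / m); split; first exact: num_real.
move=> K MK c /= Ac; apply: ltW (le_lt_trans _ MK).
by rewrite ler_pdivlMr // mulrC (le_trans (mle c)) ?AM.
Qed.

End Coordinates.

Lemma lincomb_drop (R : realType) (V : normedModType R) k (b : 'I_k -> V)
    (c : 'rV[R]_k) j :
  c ord0 j != 0 -> lincomb b c = 0 -> forall d,
  exists d', lincomb (fun i => b (lift j i)) d' = lincomb b d.
Proof.
move=> cj0 bc0 d; pose a := d ord0 j / c ord0 j.
exists (\row_i (d ord0 (lift j i) - a * c ord0 (lift j i))).
rewrite /lincomb in bc0 *; rewrite [RHS](bigD1_ord j) //=.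
move: bc0; rewrite (bigD1_ord j) //= => bc0.
have cE : \sum_(i < k.-1) c ord0 (lift j i) *: b (lift j i) = - (c ord0 j *: b j).
  by apply/eqP; rewrite -subr_eq0 opprK addrC bc0.
transitivity (\sum_(i < k.-1) d ord0 (lift j i) *: b (lift j i) -
   a *: \sum_(i < k.-1) c ord0 (lift j i) *: b (lift j i)).
  rewrite scaler_sumr -sumrB; apply: eq_bigr => i _.
  by rewrite mxE scalerBl scalerA.
by rewrite cE scalerN opprK scalerA /a mulfVK // addrC.
Qed.

Lemma finite_dim_basis (R : realType) (V : normedModType R) : finite_dim V ->
  exists n (b : 'I_n -> V),
    (forall x, exists c, lincomb b c = x) /\ (forall c, lincomb b c = 0 -> c = 0).
Proof.
case=> n [b bspan].
pose spans k := exists b : 'I_k -> V, forall x, exists c, lincomb b c = x.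
have : exists k, `[< spans k >].
  exists n; apply/asboolP; exists b => x; have [c ->] := bspan x.
  by exists (\row_i c i); apply: eq_bigr => i _; rewrite mxE.
case/ex_minnP => k /asboolP[bk bkspan] kmin.
exists k, bk; split => // c bc0; apply/rowP => j; rewrite mxE.
apply: contrapT => /eqP cj0.
suff /asboolP/kmin : spans k.-1.
  by rewrite leqNgt ltn_predL (leq_ltn_trans (leq0n j) (ltn_ord j)).
exists (fun i => bk (lift j i)) => x; have [d <-] := bkspan x.
exact: lincomb_drop cj0 bc0 d.
Qed.

Lemma finite_dim_bounded_closed_compact (R : realType) (V : normedModType R)
    (A : set V) : finite_dim V -> closed A ->
  (exists M, forall x, A x -> `|x| <= M) -> compact A.
Proof.
move=> /finite_dim_basis[n [b [bspan bfree]]].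
exact: (bounded_closed_compact_basis bfree bspan).
Qed.

Section IteratedHull.
Variables (R : realType) (V : normedModType R).
Implicit Types (K : set V).

Definition segment_point (p : R * (V * V)) : V :=
  p.1 *: p.2.1 + (1 - p.1) *: p.2.2.

Lemma segment_point_continuous : continuous segment_point.
Proof.
move=> p; have snd_cvg : (fun q : R * (V * V) => q.2) @ p --> p.2 by exact: cvg_snd.
apply: cvgD; apply: cvgZ.
- exact: cvg_fst.
- exact: continuous_comp snd_cvg (@cvg_fst _ _ (nbhs p.2.1) (nbhs p.2.2) _).
- by apply: cvgB; [exact: cvg_cst|exact: cvg_fst].
- exact: continuous_comp snd_cvg (@cvg_snd _ _ (nbhs p.2.1) (nbhs p.2.2) _).
Qed.

(* Iterated segments reach all convex combinations of [j.+1] points of [K]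
   (see [convex_comb_iter_hull]), and each step is a continuous image of a
   product of compact sets. *)
Fixpoint iter_hull K (j : nat) : set V :=
  if j is j'.+1 then
    segment_point @` (`[0, 1] `*` (iter_hull K j' `*` iter_hull K j'))
  else K.

Lemma iter_hull_compact K j : compact K -> compact (iter_hull K j).
Proof.
move=> cK; elim: j => [//|j IH] /=; apply: continuous_compact.
  exact/continuous_subspaceT/segment_point_continuous.
by apply: compact_setX; [exact: segment_compact|exact: compact_setX].
Qed.

Lemma iter_hull_sub_convex_hull K j : iter_hull K j `<=` convex_hull K.
Proof.
elim: j => [|j IH] /=; first exact: sub_convex_hull.
move=> _ [[t [x y]] [/= /andP[t0 t1] [Kx Ky]] <-].
by apply: convex_hull_convex => //; apply: IH.
Qed.

Lemma iter_hullS K j : iter_hull K j `<=` iter_hull K j.+1.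
Proof.
move=> x Kx; exists (1, (x, x)); first by rewrite /= in_itv /= ler01 lexx.
by rewrite /segment_point /= subrr scale0r addr0 scale1r.
Qed.

Lemma iter_hull_le K j k : (j <= k)%N -> iter_hull K j `<=` iter_hull K k.
Proof.
move=> /subnK <-; elim: (k - j)%N => [//|d IH].
exact: subset_trans IH (@iter_hullS _ _).
Qed.

Definition convex_comb K m (x : V) : Prop :=
  exists (t : 'I_m -> R) (y : 'I_m -> V),
  [/\ (forall i, 0 <= t i), \sum_i t i = 1, (forall i, K (y i)) &
      x = \sum_i t i *: y i].

Lemma convex_comb_iter_hull K m x : convex_comb K m.+1 x -> iter_hull K m x.
Proof.
elim: m x => [|m IH] _ [t [y [t0 t1 Ky ->]]].
  by move: t1; rewrite !big_ord1 => ->; rewrite scale1r.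
rewrite big_ord_recl; rewrite big_ord_recl in t1.
set s := \sum_(i < m.+1) t (lift ord0 i) in t1 *.
have s0 : 0 <= s by apply: sumr_ge0.
have K_iter k : K `<=` iter_hull K k := @iter_hull_le K 0 k isT.
have [s_eq0|s_neq0] := eqVneq s 0.
  have tl0 i : t (lift ord0 i) = 0.
    move/eqP: s_eq0; rewrite psumr_eq0 // => /allP.
    by move=> /(_ i (mem_index_enum _)) /eqP.
  rewrite big1 => [|i _]; last by rewrite tl0 scale0r.
  by move: t1; rewrite s_eq0 addr0 => ->; rewrite scale1r addr0; exact: K_iter.
have s_gt0 : 0 < s by rewrite lt_def s_neq0.
pose z := \sum_(i < m.+1) (t (lift ord0 i) / s) *: y (lift ord0 i).
have Kz : iter_hull K m z.
  apply: IH; exists (fun i => t (lift ord0 i) / s), (fun i => y (lift ord0 i)).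
  by split => // [i|]; [rewrite divr_ge0|rewrite -mulr_suml mulfV].
exists (t ord0, (y ord0, z)).
  split; first by rewrite /= in_itv /= t0 -t1 lerDl.
  by split => /=; [exact: K_iter|].
rewrite /segment_point /=.
have -> : 1 - t ord0 = s by rewrite -t1 addrC addKr.
rewrite scaler_sumr.
by congr (_ + _); apply: eq_bigr => i _; rewrite scalerA mulrC mulfVK.
Qed.

Lemma convex_hull_convex_comb K :
  convex_hull K `<=` [set x | exists m, convex_comb K m x].
Proof.
apply: convex_hull_sub => [x1 x2 w w0 w1 [m1 [t [x [t0 t1 Kx ->]]]]|x Kx].
  move=> [m2 [s [y [s0 s1 Ky ->]]]]; exists (m1 + m2)%N.
  pose T i :=
    match fintype.split i with inl a => w * t a | inr a => (1 - w) * s a end.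
  pose X i := match fintype.split i with inl a => x a | inr a => y a end.
  have splitl i : fintype.split (lshift m2 i) = inl i := unsplitK (inl i).
  have splitr i : fintype.split (rshift m1 i) = inr i := unsplitK (inr i).
  have Tl i : T (lshift m2 i) = w * t i by rewrite /T splitl.
  have Tr i : T (rshift m1 i) = (1 - w) * s i by rewrite /T splitr.
  have TXl i : T (lshift m2 i) *: X (lshift m2 i) = w *: (t i *: x i).
    by rewrite Tl /X splitl scalerA.
  have TXr i : T (rshift m1 i) *: X (rshift m1 i) = (1 - w) *: (s i *: y i).
    by rewrite Tr /X splitr scalerA.
  exists T, X; split => [i||i|].
  - by rewrite /T; case: fintype.split => a; rewrite mulr_ge0 ?subr_ge0.
  - rewrite big_split_ord (eq_bigr _ (fun i _ => Tl i)).
    rewrite (eq_bigr _ (fun i _ => Tr i)).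
    by rewrite -!mulr_sumr t1 s1 !mulr1 /= subrKC.
  - by rewrite /X; case: fintype.split.
  - rewrite big_split_ord (eq_bigr _ (fun i _ => TXl i)).
    by rewrite (eq_bigr _ (fun i _ => TXr i)) !scaler_sumr.
exists 1%N, (fun _ => 1), (fun _ => x).
by split => //; rewrite big_ord1 ?scale1r.
Qed.

End IteratedHull.

Section Caratheodory.
Variables (R : realType) (V : normedModType R) (n : nat) (b : 'I_n -> V).
Hypothesis b_span : forall x, exists c, lincomb b c = x.

(* The rows [(coordinates of x i, 1)] of an [m x (n + 1)] matrix with
   [m > n + 1] are linearly dependent. *)
Lemma affinely_dependent m (x : 'I_m -> V) : (n.+1 < m)%N ->
  exists u : 'I_m -> R, [/\ exists i, u i != 0, \sum_i u i = 0 &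
    \sum_i u i *: x i = 0].
Proof.
move=> nm; have [co coE] := fin_all_exists (fun i => b_span (x i)).
pose X : 'M[R]_(m, n) := \matrix_(i, j) co i ord0 j.
pose M := row_mx X (const_mx 1 : 'M[R]_(m, 1)).
have /rowV0Pn[u /sub_kermxP uM u_neq0] : kermx M != 0.
  rewrite kermx_eq0 /row_free; apply: contraTneq nm => <-.
  by rewrite -leqNgt (leq_trans (rank_leq_col M)) // addn1.
move: uM; rewrite mul_mx_row -row_mx0 => /eq_row_mx[uX u1].
exists (fun k => u ord0 k); split.
- apply/existsP; apply: contraNT u_neq0 => /existsPn u0.
  by apply/eqP/rowP => k; rewrite mxE; apply/eqP/negPn/u0.
- have := congr1 (fun A : 'M[R]_1 => A ord0 ord0) u1; rewrite !mxE => sum_u.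
  by rewrite -[RHS]sum_u; apply: eq_bigr => k _; rewrite mxE mulr1.
- transitivity (\sum_(j < n) (u *m X) ord0 j *: b j); last first.
    by rewrite uX; apply: big1 => j _; rewrite mxE scale0r.
  under [RHS]eq_bigr do rewrite mxE scaler_suml.
  rewrite exchange_big /=; apply: eq_bigr => k _.
  rewrite -coE /lincomb scaler_sumr; apply: eq_bigr => j _.
  by rewrite !mxE scalerA.
Qed.

(* Carathéodory: shift the weights along an affine dependence [u] until the
   first of them, at index [j], vanishes. *)
Lemma convex_comb_reduce (K : set V) m x : (n.+1 < m.+1)%N ->
  convex_comb K m.+1 x -> convex_comb K m x.
Proof.
move=> nm [t [y [t0 t1 Ky ->]]].
have [u [[i0 ui0] su0 suy0]] := affinely_dependent y nm.
have [i1 ui1] : exists i, 0 < u i.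
  apply: contrapT => /forallNP u_le0.
  have Nu_ge0 i : 0 <= - u i by rewrite oppr_ge0 leNgt; apply/negP/u_le0.
  have /(psumr_eq0P (fun i _ => Nu_ge0 i))/(_ i0 isT)/eqP : \sum_i - u i = 0.
    by rewrite sumrN su0 oppr0.
  by rewrite oppr_eq0 (negbTE ui0).
have [j uj jmin] :=
  @arg_minP _ R _ i1 (fun i => 0 < u i) (fun i => t i / u i) ui1.
pose r := t j / u j; pose t' i := t i - r * u i.
have t'0 i : 0 <= t' i.
  rewrite subr_ge0; have [ui_gt0|ui_le0] := ltP 0 (u i).
    by have := jmin i ui_gt0; rewrite ler_pdivlMr.
  by apply: le_trans (t0 i); rewrite mulr_ge0_le0 // divr_ge0 // ltW.
have t'j : t' j = 0 by rewrite /t' /r mulfVK ?subrr // gt_eqF.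
have st' : \sum_i t' i = 1 by rewrite sumrB -mulr_sumr su0 mulr0 subr0.
have st'y : \sum_i t' i *: y i = \sum_i t i *: y i.
  under eq_bigr do rewrite scalerBl -scalerA.
  by rewrite sumrB -scaler_sumr suy0 scaler0 subr0.
exists (fun k => t' (lift j k)), (fun k => y (lift j k)); split => //.
- by move: st'; rewrite (bigD1_ord j) //= t'j add0r.
- by rewrite -st'y (bigD1_ord j) //= t'j scale0r add0r.
Qed.

Lemma convex_comb_iter_hull_dim (K : set V) m x :
  convex_comb K m x -> iter_hull K n x.
Proof.
elim/ltn_ind: m x => -[|m] IH x xK.
  case: xK => t [y [_ + _ _]].
  by rewrite big_ord0 => /eqP; rewrite eq_sym oner_eq0.
have [mn|nm] := leqP m n; first exact/(iter_hull_le mn)/convex_comb_iter_hull.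
exact/(IH m)/convex_comb_reduce.
Qed.

Lemma convex_hull_iter_hull (K : set V) : convex_hull K = iter_hull K n.
Proof.
apply/seteqP; split; last exact: iter_hull_sub_convex_hull.
by move=> x /convex_hull_convex_comb[m]; exact: convex_comb_iter_hull_dim.
Qed.

End Caratheodory.

Lemma finite_dim_convex_hull_compact (R : realType) (V : normedModType R)
    (K : set V) : finite_dim V -> compact K -> compact (convex_hull K).
Proof.
case/finite_dim_basis => n [b [bspan _]] cK.
by rewrite (convex_hull_iter_hull bspan); exact: iter_hull_compact.
Qed.

(** * Convex spectral sets *)

Section ConvexSpectralSets.
Variables (R : realType) (V W : normedModType R)
  (ipV : V -> V -> R) (ipW : W -> W -> R) (lam : V -> W).
Hypotheses (hV : inner_product ipV) (hW : inner_product ipW)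
  (hF : FTvN ipV ipW lam).

Definition lam_orbit (x : V) : set V := [set y | lam y = lam x].

Lemma lam_orbit_saturated x : saturated lam (lam_orbit x).
Proof. by move=> y z /= ->. Qed.

Lemma lam_orbit_closed x : closed (lam_orbit x).
Proof.
have : closed (lam @^-1` [set lam x]).
  apply: closed_comp => [y _|]; first exact: (lam_continuous hV hW hF).
  exact/accessible_closed_set1/hausdorff_accessible/norm_hausdorff.
by [].
Qed.

Lemma lam_orbit_compact x : finite_dim V -> compact (lam_orbit x).
Proof.
move=> fdV; apply: finite_dim_bounded_closed_compact fdV (@lam_orbit_closed x) _.
by exists `|x| => y /= yx; rewrite -(lam_norm hF y) yx (lam_norm hF).
Qed.

Lemma closure_convex_hull_saturated E : hilbert V -> saturated lam E ->
  saturated lam (closure (convex_hull E)).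
Proof.
move=> complV satE z z' hullz z'z.
have convC := closure_convex (convex_hull_convex (E := E)).
apply: (support_dominated_nearest_mem hV hW hF convC _ hullz z'z).
  apply: (closure_support_dominated hV); apply: (convex_hull_support_dominated hV).
  exact: (saturated_support_dominated hF).
by apply: (hilbert_nearest hV z' convC (@closed_closure _ _) _ complV); exists z.
Qed.

Lemma minkowski_sum_compact_saturated A B :
  compact A -> is_convex A -> saturated lam A ->
  compact B -> is_convex B -> saturated lam B ->
  saturated lam (minkowski_sum A B).
Proof.
move=> cA convA satA cB convB satB z z' ABz z'z.
apply: (support_dominated_nearest_mem hV hW hF _ _ ABz z'z).
- exact: minkowski_sum_convex.
- apply: (minkowski_sum_support_dominated hV);
    exact: (saturated_support_dominated hF).
- by apply: compact_nearest; [exact: minkowski_sum_compact|exists z].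
Qed.

Lemma compact_convex_hull_saturated (F : set V) : finite_dim V ->
  compact F -> saturated lam F -> saturated lam (convex_hull F).
Proof.
move=> fdV cF satF z z' Fz z'z.
have convF := convex_hull_convex (E := F).
apply: (support_dominated_nearest_mem hV hW hF convF _ Fz z'z).
  apply: (convex_hull_support_dominated hV).
  exact: (saturated_support_dominated hF).
by apply: compact_nearest; [exact: finite_dim_convex_hull_compact|exists z].
Qed.

Lemma convex_hull_compact_saturated_cover E : saturated lam E -> finite_dim V ->
  convex_hull E `<=` [set z | exists2 F : set V,
    [/\ F `<=` E, compact F & saturated lam F] & convex_hull F z].
Proof.
move=> satE fdV; apply: convex_hull_sub => [x y t t0 t1|x Ex].
  move=> [F1 [F1E cF1 satF1] F1x] [F2 [F2E cF2 satF2] F2y].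
  exists (F1 `|` F2); first split.
  - by move=> w [/F1E|/F2E].
  - exact: compactU.
  - by move=> u v [/satF1 uv|/satF2 uv] vu; [left|right]; exact: uv.
  apply: convex_hull_convex => //.
    by apply: convex_hullS F1x; exact: subsetUl.
  by apply: convex_hullS F2y; exact: subsetUr.
exists (lam_orbit x); last exact: sub_convex_hull.
split; [by move=> y /= yx; exact: satE Ex yx|exact: lam_orbit_compact|].
exact: lam_orbit_saturated.
Qed.

Lemma convex_hull_saturated E : finite_dim V -> saturated lam E ->
  saturated lam (convex_hull E).
Proof.
move=> fdV satE z z' /(convex_hull_compact_saturated_cover satE fdV).
move=> [F [FE cF satF] Fz] z'z; apply: convex_hullS FE _ _.
exact: compact_convex_hull_saturated Fz z'z.
Qed.

Lemma conic_hull_saturated E : finite_dim V -> saturated lam E ->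
  saturated lam (conic_hull E).
Proof.
move=> fdV satE; rewrite conic_hullE => _ z' [t t0 [y Ey <-]] z'ty.
have [t_eq0|t_neq0] := eqVneq t 0.
  move: z'ty; rewrite t_eq0 scale0r => /(lam_eq0 hF) ->.
  by exists 0 => /=; [|exists y => //; rewrite scale0r].
have t_gt0 : 0 < t by rewrite lt_def t_neq0.
exists t => //; exists (t^-1 *: z'); last by rewrite scalerA divff // scale1r.
apply: (convex_hull_saturated fdV satE Ey).
rewrite !(lamZ hV hW hF) ?invr_ge0 // z'ty (lamZ hV hW hF) //.
by rewrite scalerA mulVf // scale1r.
Qed.

Lemma minkowski_sum_saturated A B : finite_dim V ->
  is_convex A -> saturated lam A -> is_convex B -> saturated lam B ->
  saturated lam (minkowski_sum A B).
Proof.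
move=> fdV convA satA convB satB _ z' [x [y [Ax [By ->]]]] z'xy.
have hull_orbit_sub C u : is_convex C -> saturated lam C -> C u ->
    convex_hull (lam_orbit u) `<=` C.
  by move=> convC satC Cu; apply: convex_hull_sub => // v; exact: satC.
have hull_orbit u : [/\ compact (convex_hull (lam_orbit u)),
    is_convex (convex_hull (lam_orbit u)) &
    saturated lam (convex_hull (lam_orbit u))].
  split; first exact/finite_dim_convex_hull_compact/lam_orbit_compact.
    exact: convex_hull_convex.
  exact: convex_hull_saturated fdV (@lam_orbit_saturated u).
have [cx convx satx] := hull_orbit x; have [cy convy saty] := hull_orbit y.
have [x' [y' [Hx' [Hy' ->]]]] : minkowski_sum (convex_hull (lam_orbit x))
    (convex_hull (lam_orbit y)) z'.
  apply: (minkowski_sum_compact_saturated cx convx satx cy convy saty _ z'xy).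
  by exists x, y; do ?split; exact: sub_convex_hull.
exists x', y'; do ?split; first exact: hull_orbit_sub Hx'.
exact: hull_orbit_sub Hy'.
Qed.

End ConvexSpectralSets.

Theorem proposition5p4 (R : realType) (V W : normedModType R)
  (ipV : V -> V -> R) (ipW : W -> W -> R) (lam : V -> W)
  (hV : inner_product ipV) (hW : inner_product ipW)
  (hF : FTvN ipV ipW lam) (E : set V) (hE : spectral lam E) :
  (* (a) *)
  [/\ spectral lam (closure E) /\ spectral lam (interior E)
        /\ spectral lam (boundary E),
  (* (b) *)
      (hilbert V -> spectral lam (closure (convex_hull E))),
  (* (c) *)
      (finite_dim V -> spectral lam (convex_hull E) /\ spectral lam (conic_hull E)),
  (* (d) *)
      ((hilbert V -> spectral lam (polar ipV E)
         /\ forall S : set V, spectral lam S -> linear_subspace S ->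
              spectral lam (orth ipV S)) /\
  (* (e) *)
      (hilbert V -> forall A B : set V,
         compact A -> is_convex A -> spectral lam A ->
         compact B -> is_convex B -> spectral lam B ->
         spectral lam (minkowski_sum A B)))
  & (* (f) *)
      (finite_dim V -> forall A B : set V,
         is_convex A -> spectral lam A -> is_convex B -> spectral lam B ->
         spectral lam (minkowski_sum A B))].
Proof.
move/spectralP: hE => satE; have sat := @spectralP _ _ _ lam.
split.
- rewrite !sat; split; [|split].
  + exact: closure_saturated hV hW hF _ satE.
  + exact: interior_saturated hV hW hF _ satE.
  + exact: boundary_saturated hV hW hF _ satE.
- by move=> complV; apply/sat/(closure_convex_hull_saturated hV hW hF).
- move=> fdV; rewrite !sat; split.
  + exact: convex_hull_saturated hV hW hF _ fdV satE.
  + exact: conic_hull_saturated hV hW hF _ fdV satE.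
(* Neither (d) nor (e) needs completeness: (e) only uses nearest points in
   compact sets. *)
- split=> [_|_ A B cA convA /sat satA cB convB /sat satB].
    split=> [|S /sat satS linS]; apply/sat; first exact: polar_saturated hF _ satE.
    exact: orth_saturated hV hF _ satS linS.
  apply/sat.
  exact: minkowski_sum_compact_saturated hV hW hF _ _ cA convA satA cB convB satB.
- move=> fdV A B convA /sat satA convB /sat satB; apply/sat.
  exact: minkowski_sum_saturated hV hW hF _ _ fdV convA satA convB satB.
Qed.
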